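(* Let $\Pi$ be a program and $e=(e_{in},e_{out})$ an example with $[\![\Pi]\!]e_{in}\neq e_{out}$, and let $\mathcal{P}\subseteq\mathcal{U}$ be such that $e_{out}\in\gamma(\mathrm{EvalAbstract}(\Pi,e_{in},\mathcal{P}))$. Then the mapping $\mathcal{I}$ returned by $\textsc{ConstructProof}(\Pi,e,\mathcal{P},\mathcal{U})$ is a proof of incorrectness of $\Pi$ with respect to $e$. That is: (1) for every leaf $v$ labelled by terminal $t$, $(t=[\![t]\!]e_{in})\sqsubseteq\mathcal{I}(v)$; (2) for every internal node $v$ labelled $f$ with children $v_1,\dots,v_n$, $[\![f(\mathcal{I}(v_1),\dots,\mathcal{I}(v_n))]\!]^\#\sqsubseteq\mathcal{I}(v)$; (3) $e_{out}\notin\gamma(\mathcal{I}(\mathrm{root}(\Pi)))$.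
   Context: A DSL is given by a context-free grammar $G$ with start symbol $s_0$. Productions have the form $s\to t$, where $t$ is the input variable $x$ or a constant, or $s\to f(s_1,\dots,s_n)$. Programs are finite ASTs derived from $s_0$, and each node carries the grammar symbol it derives from. Concrete semantics: $[\![x]\!]c=c$; $[\![t]\!]$ is the value of constant $t$ (we write $[\![x]\!]e_{in}=e_{in}$); $[\![f(\Pi_1,\dots,\Pi_n)]\!]c=[\![f]\!]([\![\Pi_1]\!]c,\dots,[\![\Pi_n]\!]c)$. A predicate over grammar symbol $s$ is a formula with sole free variable $s$. An abstract value is a conjunction of predicates ($\mathit{true}$ is the empty one), $\gamma(\varphi)$ is its set of satisfying values, and $\varphi\sqsubseteq\varphi'$ iff $\varphi\Rightarrow\varphi'$. $\alpha^{\mathcal{P}}(\varphi)$ is the conjunction of all $p\in\mathcal{P}$ (over the relevant symbol) with $\varphi\Rightarrow p$. $\mathcal{U}$ is the universe of predicates, and an abstract value over $\mathcal{U}$ is a conjunction of predicates from $\mathcal{U}$. It is assumed that $\mathcal{U}$ contains every equality predicate $s=c$. Each $f$ has an abstract transformer $[\![f(\varphi_1,\dots,\varphi_n)]\!]^\#$ satisfying three properties. It is sound: $c_i\in\gamma(\varphi_i)$ implies $[\![f]\!](\vec c)\in\gamma([\![f(\vec\varphi)]\!]^\#)$. It is monotone with respect to $\sqsubseteq$. It is precise on concrete inputs: $[\![f(s_1=c_1,\dots,s_n=c_n)]\!]^\#\sqsubseteq(s=[\![f]\!](c_1,\dots,c_n))$. $\mathrm{EvalAbstract}(\Pi,c,\mathcal{P})$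 is defined recursively: $\alpha^{\mathcal{P}}(x=c)$ for leaf $x$; $\alpha^{\mathcal{P}}(t=[\![t]\!])$ for leaf constant $t$; $\alpha^{\mathcal{P}}([\![f(\mathrm{EvalAbstract}(\Pi_1,c,\mathcal{P}),\dots,\mathrm{EvalAbstract}(\Pi_n,c,\mathcal{P}))]\!]^\#)$ for a node $f(\Pi_1,\dots,\Pi_n)$. A fixed integer $k\ge1$ bounds conjunction lengths. $\mathrm{StrengthenRoot}(p_+,p_-,\varphi,\mathcal{U})$ works as follows. Let $\Phi=\{p\in\mathcal{U}: p_+\Rightarrow p\}$, and let $\Psi$ be the set of conjunctions of at most $k+1$ elements of $\Phi$. Start with $\psi^*:=p_+$. Iterate over $\psi\in\Psi$, replacing $\psi^*$ by $\psi$ whenever $\psi^*\Rightarrow\psi$ and $(\varphi\wedge\psi)\Rightarrow p_-$. Return $\psi^*$. $\mathrm{StrengthenChildren}(\vec\phi,\vec\varphi,\varphi_p,\mathcal{U},f)$ works as follows, with $\vec\phi=(\phi_1,\dots,\phi_n)$ and $\vec\varphi=(\varphi_1,\dots,\varphi_n)$. Let $\Phi_i=\{p\in\mathcal{U}:\phi_i\Rightarrow p\}$, and let $\Psi_i$ be the set of conjunctions of at most $k+1$ elements of $\Phi_i$. Start with $\vec\psi^*:=\vec\phi$. Iterate over all tuples $\vec\psi$ with $\psi_i\in\Psi_i$, replacing $\vec\psi^*$ by $\vec\psi$ whenever $\psi^*_i\Rightarrow\psi_i$ for all $i$ and $[\![f(\varphi_1\wedge\psi_1,\dots,\varphi_n\wedge\psi_n)]\!]^\#\Rightarrow\varphi_p$.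 Return $\vec\psi^*$. $\textsc{ConstructProof}(\Pi,e,\mathcal{P},\mathcal{U})$ works in two phases. First, for the root $r$: let $\varphi=\mathrm{EvalAbstract}(\Pi,e_{in},\mathcal{P})$ and $\psi=\mathrm{StrengthenRoot}(s_0=[\![\Pi]\!]e_{in},\ s_0\neq e_{out},\ \varphi,\ \mathcal{U})$, and set $\mathcal{I}(r)=\varphi\wedge\psi$. Then it processes a worklist initialised to $\{r\}$. While the worklist is nonempty, it removes a node $cur$, labelled $f$, with child subtrees $\Pi_1,\dots,\Pi_n$. It sets $\phi_i=(s_i=[\![\Pi_i]\!]e_{in})$, where $s_i$ is the grammar symbol of the root of $\Pi_i$, and $\varphi_i=\mathrm{EvalAbstract}(\Pi_i,e_{in},\mathcal{P})$. It computes $\vec\psi=\mathrm{StrengthenChildren}(\vec\phi,\vec\varphi,\mathcal{I}(cur),\mathcal{U},f)$ and sets $\mathcal{I}(\mathrm{root}(\Pi_i))=\varphi_i\wedge\psi_i$ for each $i$. Each non-leaf $\mathrm{root}(\Pi_i)$ is added to the worklist. Finally it returns $\mathcal{I}$. *)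

From Stdlib Require Import List Arith ClassicalEpsilon.
Import ListNotations.
Set Implicit Arguments.

(** A DSL with its concrete and abstract semantics (data only; the
    required properties are hypotheses of the theorem). *)
Record DSL := {
  Sym : Type;
  Val : Type;
  Const : Type;
  Fn : Type;
  cval : Const -> Val;
  fsem : Fn -> list Val -> Val;
  Pred : Type;                       (* predicates (formulas in one free variable) *)
  psym : Pred -> Sym;
  psem : Pred -> Val -> Prop;
  peq : Sym -> Val -> Pred;
  absf : Fn -> list (list Pred) -> list Pred
}.

Arguments cval {d} _.
Arguments fsem {d} _ _.
Arguments psym {d} _.
Arguments psem {d} _ _.
Arguments peq {d} _ _.
Arguments absf {d} _ _.

Section Defs.
Variable D : DSL.

(** abstract values: finite conjunctions of predicates ([] = true) *)
Definition AbsVal := list (Pred D).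

Definition gamma (phi : AbsVal) (v : Val D) : Prop := Forall (fun p => psem p v) phi.

Definition aleq (phi phi' : AbsVal) : Prop := forall v, gamma phi v -> gamma phi' v.

Inductive Term := TIn | TConst (t : Const D).

Inductive Prog :=
| Leaf (s : Sym D) (t : Term)
| Node (s : Sym D) (f : Fn D) (ch : list Prog).

Definition rsym (p : Prog) : Sym D :=
  match p with Leaf s _ => s | Node s _ _ => s end.

Inductive Production :=
| PTerm (s : Sym D) (t : Term)
| PApp (s : Sym D) (f : Fn D) (ss : list (Sym D)).

Fixpoint derivable (G : Production -> Prop) (p : Prog) : Prop :=
  match p with
  | Leaf s t => G (PTerm s t)
  | Node s f ch =>
      G (PApp s f (map rsym ch)) /\
      (fix all (l : list Prog) : Prop :=
         match l with [] => True | q :: l' => derivable G q /\ all l' end) ch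
  end.

Definition IsProgram (G : Production -> Prop) (s0 : Sym D) (p : Prog) : Prop :=
  rsym p = s0 /\ derivable G p.

Definition evalTerm (t : Term) (c : Val D) : Val D :=
  match t with TIn => c | TConst t => cval t end.

Fixpoint eval (p : Prog) (c : Val D) : Val D :=
  match p with
  | Leaf _ t => evalTerm t c
  | Node _ f ch => fsem f (map (fun q => eval q c) ch)
  end.

Definition decide (P : Prop) : bool :=
  if excluded_middle_informative P then true else false.

Definition alpha (P : list (Pred D)) (s : Sym D) (phi : AbsVal) : AbsVal :=
  filter (fun p => decide (psym p = s /\ aleq phi [p])) P.

Fixpoint EvalAbstract (p : Prog) (c : Val D) (P : list (Pred D)) : AbsVal :=
  match p with
  | Leaf s t => alpha P s [peq s (evalTerm t c)]
  | Node s f ch => alpha P s (absf f (map (fun q => EvalAbstract q c P) ch))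
  end.

Definition InPsi (U : Pred D -> Prop) (k : nat) (s : Sym D) (base : AbsVal)
  (psi : AbsVal) : Prop :=
  length psi <= k + 1 /\ Forall (fun p => U p /\ psym p = s /\ aleq base [p]) psi.

Definition Enumerates (X : Type) (S : X -> Prop) (ord : list X) : Prop :=
  forall x, In x ord <-> S x.

Definition StrengthenRoot (ord : list AbsVal) (pplus : Pred D)
  (pminus : Val D -> Prop) (phi : AbsVal) : AbsVal :=
  fold_left (fun cur psi =>
     if decide (aleq cur psi /\ (forall v, gamma (phi ++ psi) v -> pminus v))
     then psi else cur) ord [pplus].

Definition RootPsi (U : Pred D -> Prop) (k : nat) (pplus : Pred D) : AbsVal -> Prop :=
  InPsi U k (psym pplus) [pplus].

Definition conjs (a b : list AbsVal) : list AbsVal :=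
  map (fun '(x, y) => x ++ y) (combine a b).

Definition StrengthenChildren (ord : list (list AbsVal)) (phis varphis : list AbsVal)
  (phip : AbsVal) (f : Fn D) : list AbsVal :=
  fold_left (fun cur psis =>
     if decide (Forall2 aleq cur psis /\ aleq (absf f (conjs varphis psis)) phip)
     then psis else cur) ord phis.

Definition ChildPsiTuples (U : Pred D -> Prop) (k : nat) (ein : Val D)
  (ch : list Prog) (psis : list AbsVal) : Prop :=
  Forall2 (fun q psi => InPsi U k (rsym q) [peq (rsym q) (eval q ein)] psi) ch psis.

Definition childPhis (ein : Val D) (ch : list Prog) : list AbsVal :=
  map (fun q => [peq (rsym q) (eval q ein)]) ch.

Definition childVarphis (ein : Val D) (P : list (Pred D)) (ch : list Prog) : list AbsVal :=
  map (fun q => EvalAbstract q ein P) ch.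

(** nodes are addressed by paths (lists of child indices) from the root *)
Fixpoint subtree (p : Prog) (path : list nat) : option Prog :=
  match path with
  | [] => Some p
  | i :: path' =>
      match p with
      | Leaf _ _ => None
      | Node _ _ ch => match nth_error ch i with
                       | None => None
                       | Some q => subtree q path'
                       end
      end
  end.

(** The worklist processing is unrolled top-down: the
    value I(v) of a node v is computed once, when its parent is processed,
    from I(parent) only; so the order of the worklist is irrelevant.
    [ordC pos] is the iteration order used by StrengthenChildren at the
    node at path [pos]. *)
Fixpoint walk (ein : Val D) (P : list (Pred D)) (ordC : list nat -> list (list AbsVal))
  (p : Prog) (pos : list nat) (Icur : AbsVal) (rest : list nat) : AbsVal :=
  match rest with
  | [] => Icur
  | i :: rest' =>
      match p with
      | Leaf _ _ => []
      | Node _ f ch =>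
          let varphis := childVarphis ein P ch in
          let psis := StrengthenChildren (ordC pos) (childPhis ein ch) varphis Icur f in
          match nth_error ch i with
          | None => []
          | Some q => walk ein P ordC q (pos ++ [i])
                        (nth i varphis [] ++ nth i psis []) rest'
          end
      end
  end.

Definition ConstructProof (p : Prog) (ein eout : Val D) (P : list (Pred D))
  (ordR : list AbsVal) (ordC : list nat -> list (list AbsVal)) : list nat -> AbsVal :=
  let varphi := EvalAbstract p ein P in
  let psi := StrengthenRoot ordR (peq (rsym p) (eval p ein)) (fun v => v <> eout) varphi in
  fun path => walk ein P ordC p [] (varphi ++ psi) path.

End Defs.

From Stdlib Require Import List Lia ClassicalEpsilon.
Import ListNotations.

(* Both strengthening loops only ever replace their current candidate by a
   weaker one that passes their acceptance test, so the result is implied by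
   the starting point and passes the test whenever the starting point does.
   Hence the label of every node v is EvalAbstract of its subtree conjoined
   with a formula implied by "v equals its concrete value", which gives (1).
   At an internal node the children's starting point, their concrete values,
   passes the test of StrengthenChildren by monotonicity and precision of the
   transformer, which gives (2); at the root, "s0 equals the concrete output"
   excludes e_out, which gives (3). *)

Lemma decide_true (Q : Prop) : decide Q = true -> Q.
Proof. unfold decide; destruct (excluded_middle_informative Q); congruence. Qed.

Lemma Forall2_nth_error {A B} (R : A -> B -> Prop) l1 l2 i a :
  Forall2 R l1 l2 -> nth_error l1 i = Some a ->
  exists b, nth_error l2 i = Some b /\ R a b.
Proof.
  intros h; revert i; induction h as [|x y l1 l2 hxy _ IH]; intros [|i] e;
    simpl in *; try discriminate; [injection e as <-; eauto | eauto].
Qed.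

Section GreedyFold.
Variables (A : Type) (R : A -> A -> Prop) (Q : A -> Prop).

Definition greedy_fold (ord : list A) (init : A) : A :=
  fold_left (fun cur x => if decide (R cur x /\ Q x) then x else cur) ord init.

Lemma greedy_fold_invariant (S : A -> Prop) ord init :
  (forall cur x, S cur -> R cur x -> Q x -> S x) ->
  S init -> S (greedy_fold ord init).
Proof.
  intros step; revert init; induction ord as [|x ord IH]; intros cur h; simpl; auto.
  apply IH; destruct (decide _) eqn:E; auto.
  apply decide_true in E as [Rx Qx]; eauto.
Qed.

Lemma greedy_fold_keeps ord init : Q init -> Q (greedy_fold ord init).
Proof. apply greedy_fold_invariant; auto. Qed.

Hypotheses (R_refl : forall x, R x x)
           (R_trans : forall x y z, R x y -> R y z -> R x z).

Lemma greedy_fold_weakens ord init : R init (greedy_fold ord init).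
Proof. apply greedy_fold_invariant; eauto. Qed.

End GreedyFold.

Section AbstractValues.
Variable D : DSL.
Implicit Types (a b x : AbsVal D) (l : list (AbsVal D)).

Lemma gamma_app a b v : gamma (a ++ b) v <-> gamma a v /\ gamma b v.
Proof. apply Forall_app. Qed.

Lemma aleq_refl a : aleq a a.
Proof. intros v h; exact h. Qed.

Lemma aleq_trans a b x : aleq a b -> aleq b x -> aleq a x.
Proof. intros h1 h2 v h; auto. Qed.

Lemma aleq_app x a b : aleq x a -> aleq x b -> aleq x (a ++ b).
Proof. intros h1 h2 v h; apply gamma_app; auto. Qed.

Lemma aleq_app_l a b : aleq (a ++ b) a.
Proof. intros v h; apply gamma_app in h; tauto. Qed.

Lemma aleq_app_r a b : aleq (a ++ b) b.
Proof. intros v h; apply gamma_app in h; tauto. Qed.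

Lemma Forall2_aleq_refl l : Forall2 (@aleq D) l l.
Proof. induction l; constructor; auto using aleq_refl. Qed.

Lemma Forall2_aleq_trans l1 l2 l3 :
  Forall2 (@aleq D) l1 l2 -> Forall2 (@aleq D) l2 l3 -> Forall2 (@aleq D) l1 l3.
Proof.
  intros h; revert l3; induction h; intros l3 h2; inversion h2; subst;
    constructor; eauto using aleq_trans.
Qed.

Lemma alpha_weakens (P : list (Pred D)) s a : aleq a (alpha P s a).
Proof.
  intros v h; apply Forall_forall; intros p hp.
  apply filter_In in hp as [_ hp]; apply decide_true in hp as [_ hp].
  specialize (hp v h); inversion hp; auto.
Qed.

Lemma conjs_nth l1 l2 :
  length l1 = length l2 ->
  conjs l1 l2 = map (fun i => nth i l1 [] ++ nth i l2 []) (seq 0 (length l1)).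
Proof.
  revert l2; induction l1 as [|a l1 IH]; intros [|b l2] h; simpl in *;
    try discriminate; auto.
  unfold conjs in *; simpl; f_equal.
  rewrite IH by lia; rewrite <- seq_shift, map_map; reflexivity.
Qed.

Lemma conjs_aleq_l l1 l2 : length l1 = length l2 -> Forall2 (@aleq D) (conjs l1 l2) l1.
Proof.
  revert l2; induction l1 as [|a l1 IH]; intros [|b l2] h; simpl in *;
    try discriminate; constructor; [apply aleq_app_l | apply IH; lia].
Qed.

Lemma conjs_aleq_r l1 l2 : length l1 = length l2 -> Forall2 (@aleq D) (conjs l1 l2) l2.
Proof.
  revert l2; induction l1 as [|a l1 IH]; intros [|b l2] h; simpl in *;
    try discriminate; constructor; [apply aleq_app_r | apply IH; lia].
Qed.

Lemma StrengthenRoot_weakens ord (pplus : Pred D) pminus phi :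
  aleq [pplus] (StrengthenRoot ord pplus pminus phi).
Proof.
  exact (greedy_fold_weakens _ (@aleq D) (fun psi => forall v, gamma (phi ++ psi) v -> pminus v)
           aleq_refl aleq_trans ord [pplus]).
Qed.

Lemma StrengthenRoot_excludes ord (pplus : Pred D) (pminus : Val D -> Prop) phi :
  (forall v, gamma (phi ++ [pplus]) v -> pminus v) ->
  forall v, gamma (phi ++ StrengthenRoot ord pplus pminus phi) v -> pminus v.
Proof.
  exact (greedy_fold_keeps _ (@aleq D) (fun psi => forall v, gamma (phi ++ psi) v -> pminus v)
           ord [pplus]).
Qed.

Lemma StrengthenChildren_weakens ord phis varphis phip (f : Fn D) :
  Forall2 (@aleq D) phis (StrengthenChildren ord phis varphis phip f).
Proof.
  exact (greedy_fold_weakens _ (Forall2 (@aleq D))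
           (fun psis => aleq (absf f (conjs varphis psis)) phip)
           Forall2_aleq_refl Forall2_aleq_trans ord phis).
Qed.

Lemma StrengthenChildren_entails ord phis varphis phip (f : Fn D) :
  aleq (absf f (conjs varphis phis)) phip ->
  aleq (absf f (conjs varphis (StrengthenChildren ord phis varphis phip f))) phip.
Proof.
  exact (greedy_fold_keeps _ (Forall2 (@aleq D))
           (fun psis => aleq (absf f (conjs varphis psis)) phip)
           ord phis).
Qed.

End AbstractValues.

Section Programs.
Variable D : DSL.

Lemma subtree_app (p : Prog D) path1 path2 :
  subtree p (path1 ++ path2) =
  match subtree p path1 with Some q => subtree q path2 | None => None end.
Proof.
  revert p; induction path1 as [|i path1 IH]; intros p; simpl; auto.
  destruct p as [|s f ch]; auto; destruct (nth_error ch i); auto.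
Qed.

Lemma walk_app ein P ordC rest (p q : Prog D) pos Icur path :
  subtree p rest = Some q ->
  walk ein P ordC p pos Icur (rest ++ path) =
  walk ein P ordC q (pos ++ rest) (walk ein P ordC p pos Icur rest) path.
Proof.
  revert p pos Icur; induction rest as [|i rest IH]; intros p pos Icur h.
  - injection h as <-; simpl; rewrite app_nil_r; reflexivity.
  - destruct p as [s t|s f ch]; [discriminate|]; simpl in h |- *.
    destruct (nth_error ch i) as [q'|]; [|discriminate].
    rewrite (IH _ _ _ h), <- app_assoc; reflexivity.
Qed.

Lemma childPhis_combine ein (ch : list (Prog D)) :
  childPhis ein ch =
  map (fun '(si, ci) => [peq si ci])
      (combine (map (@rsym D) ch) (map (fun q => eval q ein) ch)).
Proof. induction ch; simpl; f_equal; auto. Qed.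

End Programs.

Section ConstructProofCorrect.
Variables (D : DSL) (ein eout : Val D) (P : list (Pred D))
          (ordR : list (AbsVal D)) (ordC : list nat -> list (list (AbsVal D)))
          (Pi : Prog D).

Local Notation I := (ConstructProof Pi ein eout P ordR ordC).

Local Notation strengthen_children path ch f :=
  (StrengthenChildren (ordC path) (childPhis ein ch) (childVarphis ein P ch) (I path) f).

Lemma ConstructProof_child path s f ch i q :
  subtree Pi path = Some (Node s f ch) -> nth_error ch i = Some q ->
  I (path ++ [i]) =
  nth i (childVarphis ein P ch) [] ++ nth i (strengthen_children path ch f) [].
Proof.
  intros hpath hi; unfold ConstructProof; rewrite walk_app with (q := Node s f ch) by exact hpath.
  simpl; rewrite hi; reflexivity.
Qed.

Lemma ConstructProof_children path s f ch :
  subtree Pi path = Some (Node s f ch) ->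
  map (fun i => I (path ++ [i])) (seq 0 (length ch)) =
  conjs (childVarphis ein P ch) (strengthen_children path ch f).
Proof.
  intros hpath.
  assert (hvarphis : length (childVarphis ein P ch) = length ch) by apply length_map.
  assert (hpsis : length (strengthen_children path ch f) = length ch).
  { rewrite <- (Forall2_length (StrengthenChildren_weakens _ _ _ _ _ _)).
    apply length_map. }
  rewrite conjs_nth, hvarphis by congruence.
  apply map_ext_in; intros i hi; apply in_seq in hi.
  destruct (nth_error ch i) as [q|] eqn:hq.
  - exact (ConstructProof_child _ _ _ _ _ _ hpath hq).
  - apply nth_error_None in hq; lia.
Qed.

Lemma ConstructProof_refines path q :
  subtree Pi path = Some q ->
  exists psi, I path = EvalAbstract q ein P ++ psi /\
              aleq [peq (rsym q) (eval q ein)] psi.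
Proof.
  induction path as [|i path _] using rev_ind; intros hq.
  - injection hq as <-; eexists; split; [reflexivity|]; apply StrengthenRoot_weakens.
  - rewrite subtree_app in hq.
    destruct (subtree Pi path) as [[s t|s f ch]|] eqn:hpath; try discriminate.
    simpl in hq; destruct (nth_error ch i) as [q'|] eqn:hi; [|discriminate].
    injection hq as <-.
    assert (hphi : nth_error (childPhis ein ch) i = Some [peq (rsym q') (eval q' ein)]).
    { apply (map_nth_error (fun q => [peq (rsym q) (eval q ein)])), hi. }
    destruct (Forall2_nth_error _ _ _ _ _
                (StrengthenChildren_weakens _ (ordC path) _ (childVarphis ein P ch) (I path) f)
                hphi) as [psi [hpsi weaker]].
    exists psi; split; [|exact weaker].
    rewrite (ConstructProof_child _ _ _ _ _ _ hpath hi), (nth_error_nth _ _ _ hpsi).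
    f_equal; apply nth_error_nth, (map_nth_error (fun q => EvalAbstract q ein P)), hi.
Qed.

Lemma ConstructProof_leaf path s t :
  subtree Pi path = Some (Leaf s t) -> aleq [peq s (evalTerm t ein)] (I path).
Proof.
  intros hpath; destruct (ConstructProof_refines _ _ hpath) as [psi [-> weaker]].
  apply aleq_app; [apply alpha_weakens | exact weaker].
Qed.

Hypothesis absf_monotone : forall f (phis phis' : list (AbsVal D)),
  Forall2 (@aleq D) phis phis' -> aleq (absf f phis) (absf f phis').
Hypothesis absf_precise : forall f (ss : list (Sym D)) (cs : list (Val D)) (s : Sym D),
  length ss = length cs ->
  aleq (absf f (map (fun '(si, ci) => [peq si ci]) (combine ss cs))) [peq s (fsem f cs)].

Lemma absf_concrete_children_entails s f ch :
  aleq (absf f (conjs (childVarphis ein P ch) (childPhis ein ch)))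
       (EvalAbstract (Node s f ch) ein P ++ [peq s (eval (Node s f ch) ein)]).
Proof.
  assert (hlen : length (childVarphis ein P ch) = length (childPhis ein ch))
    by (unfold childVarphis, childPhis; rewrite !length_map; reflexivity).
  apply aleq_app.
  - eapply aleq_trans; [apply absf_monotone, conjs_aleq_l, hlen|].
    apply alpha_weakens.
  - eapply aleq_trans; [apply absf_monotone, conjs_aleq_r, hlen|].
    rewrite childPhis_combine; apply absf_precise; rewrite !length_map; reflexivity.
Qed.

Lemma ConstructProof_node path s f ch :
  subtree Pi path = Some (Node s f ch) ->
  aleq (absf f (map (fun i => I (path ++ [i])) (seq 0 (length ch)))) (I path).
Proof.
  intros hpath; rewrite (ConstructProof_children _ _ _ _ hpath).
  apply StrengthenChildren_entails.
  destruct (ConstructProof_refines _ _ hpath) as [psi [-> weaker]].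
  eapply aleq_trans; [apply absf_concrete_children_entails|].
  apply aleq_app; [apply aleq_app_l | eapply aleq_trans; [apply aleq_app_r | exact weaker]].
Qed.

Hypothesis peq_sem : forall (s : Sym D) c v, psem (peq s c) v <-> v = c.
Hypothesis output_wrong : eval Pi ein <> eout.

Lemma ConstructProof_root_excludes : ~ gamma (I []) eout.
Proof.
  intros hout; refine (StrengthenRoot_excludes _ ordR _ _ _ _ eout hout eq_refl).
  intros v hv; apply gamma_app in hv as [_ hv]; inversion hv as [|p l hp].
  apply peq_sem in hp; congruence.
Qed.

End ConstructProofCorrect.

Theorem mainTheorem4 (D : DSL) (G : Production D -> Prop) (s0 : Sym D) (k : nat)
  (U : Pred D -> Prop) (P : list (Pred D)) (Pi : Prog D) (ein eout : Val D)
  (ordR : list (AbsVal D)) (ordC : list nat -> list (list (AbsVal D))) :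
  (* equality predicates and the universe *)
  (forall (s : Sym D) c, psym (peq s c) = s) ->
  (forall (s : Sym D) c v, psem (peq s c) v <-> v = c) ->
  (forall (s : Sym D) c, U (peq s c)) ->
  (* abstract transformers: sound, monotone, precise on concrete inputs *)
  (forall f (phis : list (AbsVal D)) (cs : list (Val D)),
      Forall2 (fun phi c => gamma phi c) phis cs -> gamma (absf f phis) (fsem f cs)) ->
  (forall f (phis phis' : list (AbsVal D)),
      Forall2 (@aleq D) phis phis' -> aleq (absf f phis) (absf f phis')) ->
  (forall f (ss : list (Sym D)) (cs : list (Val D)) (s : Sym D),
      length ss = length cs ->
      aleq (absf f (map (fun '(si, ci) => [peq si ci]) (combine ss cs))) [peq s (fsem f cs)]) ->
  1 <= k ->
  (* the hypotheses of the theorem *)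
  IsProgram G s0 Pi ->
  eval Pi ein <> eout ->
  (forall p, In p P -> U p) ->
  gamma (EvalAbstract Pi ein P) eout ->
  (* the iteration orders used by StrengthenRoot / StrengthenChildren *)
  Enumerates (RootPsi U k (peq (rsym Pi) (eval Pi ein))) ordR ->
  (forall path s f ch, subtree Pi path = Some (Node s f ch) ->
      Enumerates (ChildPsiTuples U k ein ch) (ordC path)) ->
  let I := ConstructProof Pi ein eout P ordR ordC in
  (forall path s t, subtree Pi path = Some (Leaf s t) ->
      aleq [peq s (evalTerm t ein)] (I path)) /\
  (forall path s f ch, subtree Pi path = Some (Node s f ch) ->
      aleq (absf f (map (fun i => I (path ++ [i])) (seq 0 (length ch)))) (I path)) /\
  ~ gamma (I []) eout.
Proof.
  intros _ peq_sem _ _ absf_monotone absf_precise _ _ output_wrong _ _ _ _ I.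
  split; [|split].
  - apply ConstructProof_leaf.
  - apply ConstructProof_node; assumption.
  - apply ConstructProof_root_excludes; assumption.
Qed.
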